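(* Let $q$ be a complex number with $|q|<1$. Then \[ \sum_{n\geq 0} q^{4n+1} (q^{4n+4};q^4)_\infty (q;q)_{2n} =\frac{2q^2(q^4;q^4)_\infty}{1+q^3}+ \frac{q(1-q) (q;q)_\infty}{1+q^3}, \] and \[ (1+q^3) \sum_{n\geq 0} \frac{(-q^2;q^2)_n\, q^{2n+1}}{(q;q^2)_{n}} = \frac{q^2(q^4;q^4)_\infty}{(q;q)_\infty}-q^2+q . \]
   Context: For a complex number $a$ and $|q|<1$: $(a;q)_0=1$, $(a;q)_n=\prod_{j=0}^{n-1}(1-aq^j)$ for integers $n\ge 1$, and $(a;q)_\infty=\prod_{j=0}^{\infty}(1-aq^j)$. *)

From Stdlib Require Import Reals.
From Coquelicot Require Import Coquelicot.
Open Scope C_scope.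

Fixpoint qpoch (a q : C) (n : nat) : C :=
  match n with
  | O => 1
  | S m => qpoch a q m * (1 - a * q ^ m)
  end.

(* infinite q-Pochhammer symbol (a;q)_oo: the limit of the partial products
   (Coquelicot's [lim] on the complete space C; it is the genuine limit
   whenever the partial products converge, which they do for |q| < 1). *)
Definition qpoch_inf (a q : C) : C :=
  @lim (CompleteNormedModule.CompleteSpace _ C_CompleteNormedModule) (filtermap (fun n => qpoch a q n) eventually).

(* Both series telescope.  Put r_n = (q;q^2)_n / (-q^2;q^2)_n, so that
   r_(n+1) = r_n (1 - q^(2n+1)) / (1 + q^(2n+2)).  Since
   (q;q)_(2n) (-q^2;q^2)_n = (q^4;q^4)_n (q;q^2)_n  and
   (q^(4n+4);q^4)_oo = (q^4;q^4)_oo / (q^4;q^4)_n, the n-th terms of the two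
   series are (q^4;q^4)_oo q^(4n+1) r_n and q^(2n+1) / r_n.  With x = q^(2n),
     q^(4n+1) r_n = c_n - c_(n+1),   c_n = r_n (q^2 x + q x^2 - q (1 - q)) / (1 + q^3),
     q^(2n+1) / r_n = d_n - d_(n+1), d_n = q (x - q) / ((1 + q^3) r_n),
   and r_n -> (q;q)_oo / (q^4;q^4)_oo, which gives both sums.  The analytic
   input is that (a;q)_n converges for |q| < 1, to a nonzero limit if |a| < 1. *)

From Stdlib Require Import Reals Lra Lia.
From Coquelicot Require Import Coquelicot.
Open Scope C_scope.

Lemma Cmod_sub_ge (x y : C) : (Cmod x - Cmod y <= Cmod (x - y))%R.
Proof.
  assert (H : (Cmod x <= Cmod (x - y) + Cmod y)%R).
  { replace x with ((x - y) + y) at 1 by ring. apply Cmod_triangle. }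
  lra.
Qed.

Lemma pow_le_one (r : R) (n : nat) : (0 <= r <= 1)%R -> (r ^ n <= 1)%R.
Proof. intros Hr. rewrite <- (pow1 n). apply pow_incr. exact Hr. Qed.

Lemma Cmod_pow_lt_1 (q : C) (k : nat) :
  (Cmod q < 1)%R -> (0 < k)%nat -> (Cmod (q ^ k) < 1)%R.
Proof.
  intros Hq Hk. rewrite Cmod_pow.
  apply pow_lt_1_compat; [split; [apply Cmod_ge_0 | exact Hq] | exact Hk].
Qed.

Lemma one_sub_neq_0 (z : C) : (Cmod z < 1)%R -> 1 - z <> 0.
Proof.
  intros Hz E. pose proof (Cmod_sub_ge 1 z) as H. rewrite E, Cmod_0, Cmod_1 in H. lra.
Qed.

Lemma one_add_neq_0 (z : C) : (Cmod z < 1)%R -> 1 + z <> 0.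
Proof.
  intros Hz. replace (1 + z) with (1 - - z) by ring.
  apply one_sub_neq_0. rewrite Cmod_opp. exact Hz.
Qed.

(** * Limits of complex sequences *)

Definition is_lim_Cseq (u : nat -> C) (l : C) : Prop :=
  filterlim u eventually (locally l).

Lemma is_lim_Cseq_spec (u : nat -> C) (l : C) :
  is_lim_Cseq u l <->
  forall eps : R, (0 < eps)%R ->
    exists N, forall n, (N <= n)%nat -> (Cmod (u n - l) < eps)%R.
Proof.
  unfold is_lim_Cseq; rewrite filterlim_locally_ball_norm; split.
  - intros H eps Heps; exact (H (mkposreal eps Heps)).
  - intros H eps; exact (H eps (cond_pos eps)).
Qed.

Lemma is_lim_Cseq_const (c : C) : is_lim_Cseq (fun _ => c) c.
Proof. apply filterlim_const. Qed.

Lemma is_lim_Cseq_ext (u v : nat -> C) (l : C) :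
  (forall n, u n = v n) -> is_lim_Cseq u l -> is_lim_Cseq v l.
Proof. apply filterlim_ext. Qed.

Lemma is_lim_Cseq_unique (u : nat -> C) (l m : C) : is_lim_Cseq u l -> is_lim_Cseq u m -> l = m.
Proof. exact (filterlim_locally_unique (F := eventually) u l m). Qed.

Lemma is_lim_Cseq_plus (u v : nat -> C) (l m : C) :
  is_lim_Cseq u l -> is_lim_Cseq v m -> is_lim_Cseq (fun n => u n + v n) (l + m).
Proof.
  intros Hu Hv.
  exact (filterlim_comp_2 u v Cplus Hu Hv (@filterlim_plus _ C_NormedModule l m)).
Qed.

Lemma is_lim_Cseq_opp (u : nat -> C) (l : C) :
  is_lim_Cseq u l -> is_lim_Cseq (fun n => - u n) (- l).
Proof.
  intros Hu. exact (filterlim_comp _ _ _ u Copp _ _ _ Hu (@filterlim_opp _ C_NormedModule l)).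
Qed.

(* The uniform structure of [C] is the product one, that of [C_AbsRing] comes
   from [Cmod]; they are not convertible but have the same convergent sequences. *)
Lemma is_lim_Cseq_AbsRing (u : nat -> C) (l : C) :
  is_lim_Cseq u l <-> filterlim u eventually (@locally (AbsRing_UniformSpace C_AbsRing) l).
Proof.
  unfold is_lim_Cseq.
  rewrite filterlim_locally_ball_norm,
    (filterlim_locally_ball_norm (K := C_AbsRing) (U := AbsRing_NormedModule C_AbsRing)).
  reflexivity.
Qed.

Lemma is_lim_Cseq_mult (u v : nat -> C) (l m : C) :
  is_lim_Cseq u l -> is_lim_Cseq v m -> is_lim_Cseq (fun n => u n * v n) (l * m).
Proof.
  rewrite !is_lim_Cseq_AbsRing. intros Hu Hv.
  exact (filterlim_comp_2 u v (@mult C_AbsRing) Hu Hv (filterlim_mult l m)).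
Qed.

Lemma is_lim_Cseq_subseq (phi : nat -> nat) (u : nat -> C) (l : C) :
  (forall n, (phi n < phi (S n))%nat) ->
  is_lim_Cseq u l -> is_lim_Cseq (fun n => u (phi n)) l.
Proof.
  intros Hphi Hu. exact (filterlim_comp _ _ _ phi u _ _ _ (eventually_subseq phi Hphi) Hu).
Qed.

Lemma is_lim_Cseq_unshift (u : nat -> C) (l : C) :
  is_lim_Cseq (fun n => u (S n)) l -> is_lim_Cseq u l.
Proof.
  intros Hu P HP. destruct (Hu P HP) as [N HN].
  exists (S N). intros [|n] Hn; [lia | apply HN; lia].
Qed.

Lemma is_lim_Cseq_inv (u : nat -> C) (l : C) :
  l <> 0 -> is_lim_Cseq u l -> is_lim_Cseq (fun n => / u n) (/ l).
Proof.
  intros Hl. rewrite !is_lim_Cseq_spec. intros Hu eps Heps.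
  assert (Hl0 : (0 < Cmod l)%R) by (apply Cmod_gt_0; exact Hl).
  destruct (Hu (Cmod l / 2)%R) as [N1 HN1]; [lra|].
  destruct (Hu (eps * (Cmod l * Cmod l) / 2)%R) as [N2 HN2].
  { apply Rdiv_lt_0_compat; [apply Rmult_lt_0_compat; nra | lra]. }
  exists (N1 + N2)%nat. intros n Hn.
  specialize (HN1 n ltac:(lia)). specialize (HN2 n ltac:(lia)).
  assert (Hun : (Cmod l / 2 <= Cmod (u n))%R).
  { pose proof (Cmod_sub_ge l (u n)) as H.
    replace (l - u n) with (- (u n - l)) in H by ring. rewrite Cmod_opp in H. lra. }
  assert (Hu0 : u n <> 0) by (intros E; rewrite E, Cmod_0 in Hun; lra).
  replace (/ u n - / l) with (- (u n - l) * / (u n * l)) by (field; auto).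
  rewrite Cmod_mult, Cmod_opp, Cmod_inv, Cmod_mult by (apply Cmult_neq_0; auto).
  apply (Rmult_lt_reg_r (Cmod (u n) * Cmod l)); [nra|].
  rewrite Rmult_assoc, Rinv_l, Rmult_1_r by nra.
  apply (Rlt_le_trans _ _ _ HN2).
  assert (0 < eps * Cmod l)%R by nra. nra.
Qed.

Lemma is_lim_Cseq_geom (q : C) : (Cmod q < 1)%R -> is_lim_Cseq (fun n => q ^ n) 0.
Proof.
  intros Hq. apply is_lim_Cseq_spec. intros eps Heps.
  assert (Hq0 := Cmod_ge_0 q).
  destruct (pow_lt_1_zero (Cmod q)) with (y := eps) as [N HN];
    [rewrite Rabs_pos_eq; auto | exact Heps |].
  exists N. intros n Hn.
  replace (q ^ n - 0) with (q ^ n) by ring. rewrite Cmod_pow.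
  specialize (HN n Hn). rewrite Rabs_pos_eq in HN by (apply pow_le; exact Hq0). exact HN.
Qed.

Lemma is_lim_Cseq_Cmod_ge (u : nat -> C) (l : C) (c : R) :
  (forall n, c <= Cmod (u n))%R -> is_lim_Cseq u l -> (c <= Cmod l)%R.
Proof.
  intros Hc Hu. apply Rnot_lt_le. intros Hlt.
  rewrite is_lim_Cseq_spec in Hu.
  destruct (Hu (c - Cmod l)%R) as [N HN]; [lra|].
  specialize (HN N (le_n N)). specialize (Hc N).
  pose proof (Cmod_sub_ge (u N) l). lra.
Qed.

Lemma sum_n_telescope (c : nat -> C) (n : nat) :
  sum_n (fun k => c k - c (S k)) n = c O - c (S n).
Proof.
  induction n as [|n IH].
  - apply sum_O.
  - rewrite sum_Sn, IH. unfold plus; simpl. ring.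
Qed.

Lemma is_series_telescope (c : nat -> C) (l : C) :
  is_lim_Cseq c l -> is_series (fun k => c k - c (S k)) (c O - l).
Proof.
  intros Hc. apply (is_lim_Cseq_ext (fun n => c O - c (S n))).
  - intros n. symmetry. apply sum_n_telescope.
  - apply is_lim_Cseq_plus; [apply is_lim_Cseq_const|].
    apply is_lim_Cseq_opp. exact (is_lim_Cseq_subseq S c l (fun n => le_n _) Hc).
Qed.

Lemma is_lim_Cseq_of_telescope (c : nat -> C) (s : C) :
  is_series (fun k => c k - c (S k)) s -> is_lim_Cseq c (c O - s).
Proof.
  intros Hs. apply is_lim_Cseq_unshift.
  apply (is_lim_Cseq_ext (fun n => c O - sum_n (fun k => c k - c (S k)) n)).
  - intros n. rewrite sum_n_telescope. ring.
  - apply is_lim_Cseq_plus; [apply is_lim_Cseq_const|].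
    apply is_lim_Cseq_opp. exact Hs.
Qed.

(** * q-Pochhammer symbols *)

Lemma qpoch_S (a q : C) (n : nat) : qpoch a q (S n) = qpoch a q n * (1 - a * q ^ n).
Proof. reflexivity. Qed.

Lemma qpoch_add (a q : C) (m n : nat) : qpoch a q (m + n) = qpoch a q m * qpoch (a * q ^ m) q n.
Proof.
  induction n as [|n IH].
  - rewrite Nat.add_0_r. simpl. ring.
  - rewrite Nat.add_succ_r, !qpoch_S, IH, Cpow_add_r. ring.
Qed.

Lemma qpoch_double (a q : C) (n : nat) :
  qpoch a q (2 * n) = qpoch a (q ^ 2) n * qpoch (a * q) (q ^ 2) n.
Proof.
  induction n as [|n IH].
  - simpl. ring.
  - replace (2 * S n)%nat with (S (S (2 * n))) by lia.
    rewrite !qpoch_S, IH, (Cpow_S q (2 * n)), <- Cpow_mult_r. ring.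
Qed.

Lemma qpoch_mul_opp (a q : C) (n : nat) :
  qpoch a q n * qpoch (- a) q n = qpoch (a ^ 2) (q ^ 2) n.
Proof.
  induction n as [|n IH].
  - simpl. ring.
  - rewrite !qpoch_S, <- IH, <- Cpow_mult_r, Nat.mul_comm, Cpow_mult_r. ring.
Qed.

Lemma qpoch_neq_0 (a q : C) (n : nat) : (Cmod q <= 1)%R -> (Cmod a < 1)%R -> qpoch a q n <> 0.
Proof.
  intros Hq Ha. induction n as [|n IH].
  - apply C1_nz.
  - rewrite qpoch_S. apply Cmult_neq_0; [exact IH|].
    apply one_sub_neq_0. rewrite Cmod_mult, Cmod_pow.
    assert (Cmod q ^ n <= 1)%R by (apply pow_le_one; split; [apply Cmod_ge_0 | exact Hq]).
    assert (0 <= Cmod q ^ n)%R by (apply pow_le, Cmod_ge_0).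
    pose proof (Cmod_ge_0 a). nra.
Qed.

Section QPochhammerBounds.

Variables (a q : C).
Hypothesis hq : (Cmod q < 1)%R.

Let hr : (0 <= Cmod q)%R := Cmod_ge_0 q.

Lemma Cmod_qpoch_le_exp (n : nat) :
  (Cmod (qpoch a q n) <= exp (Cmod a * (1 - Cmod q ^ n) / (1 - Cmod q)))%R.
Proof.
  induction n as [|n IH].
  - simpl. rewrite Cmod_1.
    replace (Cmod a * (1 - 1) / (1 - Cmod q))%R with 0%R by (field; lra).
    rewrite exp_0. lra.
  - rewrite qpoch_S, Cmod_mult.
    replace (Cmod a * (1 - Cmod q ^ S n) / (1 - Cmod q))%R
      with (Cmod a * (1 - Cmod q ^ n) / (1 - Cmod q) + Cmod a * Cmod q ^ n)%R
      by (simpl; field; lra).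
    rewrite exp_plus. apply Rmult_le_compat; try apply Cmod_ge_0; [exact IH|].
    eapply Rle_trans; [apply Cmod_triangle|].
    rewrite Cmod_opp, Cmod_1, Cmod_mult, Cmod_pow. apply exp_ineq1_le.
Qed.

Lemma Cmod_qpoch_bounded (n : nat) : (Cmod (qpoch a q n) <= exp (Cmod a / (1 - Cmod q)))%R.
Proof.
  eapply Rle_trans; [apply Cmod_qpoch_le_exp|].
  assert (Hexp : (Cmod a * (1 - Cmod q ^ n) / (1 - Cmod q) <= Cmod a / (1 - Cmod q))%R).
  { unfold Rdiv. apply Rmult_le_compat_r; [left; apply Rinv_0_lt_compat; lra|].
    assert (0 <= Cmod q ^ n)%R by (apply pow_le, hr). pose proof (Cmod_ge_0 a). nra. }
  destruct Hexp as [Hlt | Heq]; [left; apply exp_increasing, Hlt | right; rewrite Heq; reflexivity].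
Qed.

(* Weierstrass' product inequality [prod (1 - t_j) >= 1 - sum t_j]. *)
Lemma Cmod_qpoch_ge (n : nat) : (Cmod a <= 1)%R ->
  (1 - Cmod a * (1 - Cmod q ^ n) / (1 - Cmod q) <= Cmod (qpoch a q n))%R.
Proof.
  intros Ha1. pose proof (Cmod_ge_0 a) as Ha.
  induction n as [|n IH].
  - simpl. rewrite Cmod_1.
    replace (Cmod a * (1 - 1) / (1 - Cmod q))%R with 0%R by (field; lra). lra.
  - rewrite qpoch_S, Cmod_mult.
    set (A := (Cmod a * (1 - Cmod q ^ n) / (1 - Cmod q))%R) in *.
    set (t := (Cmod a * Cmod q ^ n)%R).
    assert (Hrn : (0 <= Cmod q ^ n <= 1)%R)
      by (split; [apply pow_le, hr | apply pow_le_one; lra]).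
    assert (HA : (0 <= A)%R).
    { unfold A, Rdiv. apply Rmult_le_pos; [nra | left; apply Rinv_0_lt_compat; lra]. }
    assert (Ht : (0 <= t <= 1)%R) by (unfold t; split; nra).
    assert (Hfactor : (1 - t <= Cmod (1 - a * q ^ n))%R).
    { pose proof (Cmod_sub_ge 1 (a * q ^ n)) as H.
      rewrite Cmod_1, Cmod_mult, Cmod_pow in H. exact H. }
    replace (1 - Cmod a * (1 - Cmod q ^ S n) / (1 - Cmod q))%R with (1 - A - t)%R
      by (unfold A, t; simpl; field; lra).
    apply Rle_trans with ((1 - A) * (1 - t))%R; [nra|].
    destruct (Rle_or_lt 0 (1 - A)) as [Hpos | Hneg].
    + apply Rmult_le_compat; lra.
    + apply Rle_trans with 0%R; [nra | apply Rmult_le_pos; apply Cmod_ge_0].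
Qed.

Lemma qpoch_cvg : exists l, is_lim_Cseq (qpoch a q) l.
Proof.
  set (M := exp (Cmod a / (1 - Cmod q))).
  assert (Hinc : @ex_series _ C_CompleteNormedModule (fun k => qpoch a q k - qpoch a q (S k))).
  { apply (ex_series_le _ (fun k => M * Cmod a * Cmod q ^ k)%R).
    - intros k. change norm with Cmod.
      replace (qpoch a q k - qpoch a q (S k)) with (qpoch a q k * (a * q ^ k))
        by (rewrite qpoch_S; ring).
      rewrite Cmod_mult, Cmod_mult, Cmod_pow, Rmult_assoc.
      apply Rmult_le_compat_r; [apply Rmult_le_pos; [apply Cmod_ge_0 | apply pow_le, hr]|].
      apply Cmod_qpoch_bounded.
    - apply (@ex_series_scal R_AbsRing R_NormedModule (M * Cmod a)%R (fun k => Cmod q ^ k)%R).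
      apply ex_series_geom. rewrite Rabs_pos_eq; [exact hq | exact hr]. }
  destruct Hinc as [s Hs].
  exists (qpoch a q 0 - s). exact (is_lim_Cseq_of_telescope _ _ Hs).
Qed.

End QPochhammerBounds.

Lemma is_lim_qpoch_inf (a q : C) : (Cmod q < 1)%R -> is_lim_Cseq (qpoch a q) (qpoch_inf a q).
Proof.
  intros hq. destruct (qpoch_cvg a q hq) as [l Hl].
  set (T := CompleteNormedModule.CompleteSpace _ C_CompleteNormedModule).
  set (F := filtermap (qpoch a q) eventually).
  assert (Hcauchy : @cauchy T F).
  { intros eps. exists l. apply Hl, locally_ball. }
  assert (Hlim := @complete_cauchy T F (filtermap_proper_filter _ _ _ _ eventually_filter) Hcauchy).
  intros P [eps HP]. exact (filter_imp _ _ (fun n Hn => HP _ Hn) (Hlim eps)).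
Qed.

Lemma qpoch_inf_shift (a q : C) (n : nat) : (Cmod q < 1)%R ->
  qpoch_inf a q = qpoch a q n * qpoch_inf (a * q ^ n) q.
Proof.
  intros hq. apply (is_lim_Cseq_unique (fun m => qpoch a q (n + m))).
  - exact (is_lim_Cseq_subseq (Nat.add n) _ _ (fun m => ltac:(lia)) (is_lim_qpoch_inf a q hq)).
  - apply (is_lim_Cseq_ext (fun m => qpoch a q n * qpoch (a * q ^ n) q m)).
    + intros m. symmetry. apply qpoch_add.
    + apply is_lim_Cseq_mult; [apply is_lim_Cseq_const | exact (is_lim_qpoch_inf _ q hq)].
Qed.

(* Split off a finite product so that the tail (b;q)_oo has [|b| <= (1 - |q|)/2],
   hence modulus at least [1/2] by the product inequality. *)
Lemma qpoch_inf_neq_0 (a q : C) : (Cmod q < 1)%R -> (Cmod a < 1)%R -> qpoch_inf a q <> 0.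
Proof.
  intros hq ha. pose proof (Cmod_ge_0 q) as hr. pose proof (Cmod_ge_0 a) as Ha0.
  destruct (pow_lt_1_zero (Cmod q)) with (y := ((1 - Cmod q) / 2)%R) as [N HN];
    [rewrite Rabs_pos_eq; lra | lra |].
  specialize (HN N (le_n N)). rewrite Rabs_pos_eq in HN by (apply pow_le, hr).
  set (b := a * q ^ N).
  assert (Hb : (Cmod b <= (1 - Cmod q) / 2)%R).
  { unfold b. rewrite Cmod_mult, Cmod_pow. assert (0 <= Cmod q ^ N)%R by (apply pow_le, hr). nra. }
  assert (Htail : (1 / 2 <= Cmod (qpoch_inf b q))%R).
  { apply (is_lim_Cseq_Cmod_ge (qpoch b q)); [intros m | exact (is_lim_qpoch_inf b q hq)].
    eapply Rle_trans; [|apply Cmod_qpoch_ge; [exact hq | lra]].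
    assert (Hm : (0 <= Cmod q ^ m <= 1)%R) by (split; [apply pow_le, hr | apply pow_le_one; lra]).
    assert (Cmod b * (1 - Cmod q ^ m) / (1 - Cmod q) <= 1 / 2)%R.
    { apply (Rmult_le_reg_r (1 - Cmod q)); [lra|].
      unfold Rdiv. rewrite Rmult_assoc, Rinv_l, Rmult_1_r by lra.
      pose proof (Cmod_ge_0 b). nra. }
    lra. }
  rewrite (qpoch_inf_shift a q N hq). apply Cmult_neq_0.
  - apply qpoch_neq_0; lra.
  - fold b. intros E. rewrite E, Cmod_0 in Htail. lra.
Qed.

(** * The two telescoping series *)

Lemma qpoch_double_mul_opp (q : C) (n : nat) :
  qpoch q q (2 * n) * qpoch (- q ^ 2) (q ^ 2) n = qpoch (q ^ 4) (q ^ 4) n * qpoch q (q ^ 2) n.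
Proof.
  rewrite qpoch_double.
  replace (q * q) with (q ^ 2) by ring.
  rewrite <- Cmult_assoc, qpoch_mul_opp, <- !Cpow_mult_r. simpl (2 * 2)%nat. ring.
Qed.

Lemma Cpow_double_S (q : C) (n : nat) : q ^ (2 * S n) = q ^ 2 * q ^ (2 * n).
Proof. rewrite <- Cpow_add_r. f_equal. lia. Qed.

Definition qpoch_ratio (q : C) (n : nat) : C := qpoch q (q ^ 2) n / qpoch (- q ^ 2) (q ^ 2) n.

Definition first_antidiff (q : C) (n : nat) : C :=
  qpoch_ratio q n * (q ^ 2 * q ^ (2 * n) + q * (q ^ (2 * n)) ^ 2 - q * (1 - q)) / (1 + q ^ 3).

Definition second_antidiff (q : C) (n : nat) : C :=
  q * (q ^ (2 * n) - q) / ((1 + q ^ 3) * qpoch_ratio q n).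

Section TelescopingSeries.

Variable q : C.
Hypothesis hq : (Cmod q < 1)%R.

Let hq2 : (Cmod (q ^ 2) < 1)%R.
Proof. apply Cmod_pow_lt_1; [exact hq | lia]. Qed.

Let hq4 : (Cmod (q ^ 4) < 1)%R.
Proof. apply Cmod_pow_lt_1; [exact hq | lia]. Qed.

Lemma one_add_cube_neq_0 : 1 + q ^ 3 <> 0.
Proof. apply one_add_neq_0, Cmod_pow_lt_1; [exact hq | lia]. Qed.

Lemma one_sub_odd_pow_neq_0 (n : nat) : 1 - q * q ^ (2 * n) <> 0.
Proof. apply one_sub_neq_0. rewrite <- Cpow_S. apply Cmod_pow_lt_1; [exact hq | lia]. Qed.

Lemma one_add_even_pow_neq_0 (n : nat) : 1 + q ^ 2 * q ^ (2 * n) <> 0.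
Proof. apply one_add_neq_0. rewrite <- Cpow_add_r. apply Cmod_pow_lt_1; [exact hq | lia]. Qed.

Lemma qpoch_odd_neq_0 (n : nat) : qpoch q (q ^ 2) n <> 0.
Proof. apply qpoch_neq_0; lra. Qed.

Lemma qpoch_neg_even_neq_0 (n : nat) : qpoch (- q ^ 2) (q ^ 2) n <> 0.
Proof. apply qpoch_neq_0; [lra | rewrite Cmod_opp; exact hq2]. Qed.

Lemma qpoch_ratio_S (n : nat) :
  qpoch_ratio q (S n) = qpoch_ratio q n * (1 - q * q ^ (2 * n)) / (1 + q ^ 2 * q ^ (2 * n)).
Proof.
  unfold qpoch_ratio. rewrite !qpoch_S, <- Cpow_mult_r.
  pose proof (qpoch_neg_even_neq_0 n). pose proof (one_add_even_pow_neq_0 n).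
  field. auto.
Qed.

Lemma qpoch_ratio_neq_0 (n : nat) : qpoch_ratio q n <> 0.
Proof.
  unfold qpoch_ratio. apply Cmod_gt_0.
  rewrite Cmod_div by apply qpoch_neg_even_neq_0.
  apply Rdiv_lt_0_compat; apply Cmod_gt_0; [apply qpoch_odd_neq_0 | apply qpoch_neg_even_neq_0].
Qed.

Lemma qpoch_ratio_alt (n : nat) :
  qpoch_ratio q n = qpoch q q (2 * n) / qpoch (q ^ 4) (q ^ 4) n.
Proof.
  unfold qpoch_ratio.
  assert (qpoch (q ^ 4) (q ^ 4) n <> 0) by (apply qpoch_neq_0; lra).
  pose proof (qpoch_neg_even_neq_0 n).
  transitivity (qpoch (q ^ 4) (q ^ 4) n * qpoch q (q ^ 2) n
                / (qpoch (q ^ 4) (q ^ 4) n * qpoch (- q ^ 2) (q ^ 2) n)); [field; auto|].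
  rewrite <- qpoch_double_mul_opp. field. auto.
Qed.

Lemma is_lim_qpoch_ratio :
  is_lim_Cseq (qpoch_ratio q) (qpoch_inf q q / qpoch_inf (q ^ 4) (q ^ 4)).
Proof.
  apply (is_lim_Cseq_ext (fun n => qpoch q q (2 * n) * / qpoch (q ^ 4) (q ^ 4) n)).
  - intros n. symmetry. apply qpoch_ratio_alt.
  - apply is_lim_Cseq_mult.
    + exact (is_lim_Cseq_subseq (Nat.mul 2) _ _ (fun n => ltac:(lia)) (is_lim_qpoch_inf q q hq)).
    + apply is_lim_Cseq_inv; [apply qpoch_inf_neq_0; exact hq4 | apply is_lim_qpoch_inf, hq4].
Qed.

Lemma is_lim_pow_double : is_lim_Cseq (fun n => q ^ (2 * n)) 0.
Proof.
  exact (is_lim_Cseq_subseq (Nat.mul 2) _ _ (fun n => ltac:(lia)) (is_lim_Cseq_geom q hq)).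
Qed.

Lemma first_antidiff_step (n : nat) :
  q ^ (4 * n + 1) * qpoch_ratio q n = first_antidiff q n - first_antidiff q (S n).
Proof.
  unfold first_antidiff. rewrite qpoch_ratio_S, Cpow_double_S.
  replace (q ^ (4 * n + 1)) with (q * (q ^ (2 * n)) ^ 2)
    by (rewrite <- Cpow_mult_r, <- Cpow_S; f_equal; lia).
  pose proof (one_add_even_pow_neq_0 n). pose proof one_add_cube_neq_0.
  field. auto.
Qed.

Lemma is_series_first :
  is_series (fun n => q ^ (4 * n + 1) * qpoch_ratio q n)
    (2 * q ^ 2 / (1 + q ^ 3)
     + q * (1 - q) / (1 + q ^ 3) * (qpoch_inf q q / qpoch_inf (q ^ 4) (q ^ 4))).
Proof.
  set (L := qpoch_inf q q / qpoch_inf (q ^ 4) (q ^ 4)).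
  assert (Hlim : is_lim_Cseq (first_antidiff q)
                   (L * (q ^ 2 * 0 + q * (0 * 0) - q * (1 - q)) / (1 + q ^ 3))).
  { unfold first_antidiff. apply is_lim_Cseq_mult; [|apply is_lim_Cseq_const].
    apply is_lim_Cseq_mult; [exact is_lim_qpoch_ratio|].
    apply is_lim_Cseq_plus; [apply is_lim_Cseq_plus|apply is_lim_Cseq_const].
    - apply is_lim_Cseq_mult; [apply is_lim_Cseq_const | exact is_lim_pow_double].
    - apply is_lim_Cseq_mult; [apply is_lim_Cseq_const|].
      apply (is_lim_Cseq_ext (fun n => q ^ (2 * n) * q ^ (2 * n))); [intros n; ring|].
      apply is_lim_Cseq_mult; exact is_lim_pow_double. }
  pose proof one_add_cube_neq_0 as Hcube.
  assert (qpoch_inf (q ^ 4) (q ^ 4) <> 0) by (apply qpoch_inf_neq_0; exact hq4).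
  replace (2 * q ^ 2 / (1 + q ^ 3) + q * (1 - q) / (1 + q ^ 3) * L)
    with (first_antidiff q 0 - L * (q ^ 2 * 0 + q * (0 * 0) - q * (1 - q)) / (1 + q ^ 3)).
  - apply (is_series_ext (fun n => first_antidiff q n - first_antidiff q (S n))).
    + intros n. symmetry. apply first_antidiff_step.
    + exact (is_series_telescope _ _ Hlim).
  - unfold first_antidiff, qpoch_ratio. rewrite Nat.mul_0_r. cbn [qpoch].
    change (q ^ 0) with (RtoC 1). field. exact Hcube.
Qed.

Lemma second_antidiff_step (n : nat) :
  q ^ (2 * n + 1) / qpoch_ratio q n = second_antidiff q n - second_antidiff q (S n).
Proof.
  unfold second_antidiff. rewrite qpoch_ratio_S, Cpow_double_S, Cpow_add_r.
  pose proof (one_sub_odd_pow_neq_0 n). pose proof (one_add_even_pow_neq_0 n).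
  pose proof one_add_cube_neq_0. pose proof (qpoch_ratio_neq_0 n).
  field. auto.
Qed.

Lemma is_series_second :
  is_series (fun n => q ^ (2 * n + 1) / qpoch_ratio q n)
    ((q ^ 2 * (qpoch_inf (q ^ 4) (q ^ 4) / qpoch_inf q q) - q ^ 2 + q) / (1 + q ^ 3)).
Proof.
  set (L := qpoch_inf q q / qpoch_inf (q ^ 4) (q ^ 4)).
  pose proof one_add_cube_neq_0.
  assert (qpoch_inf q q <> 0) by (apply qpoch_inf_neq_0; exact hq).
  assert (qpoch_inf (q ^ 4) (q ^ 4) <> 0) by (apply qpoch_inf_neq_0; exact hq4).
  assert (L <> 0) by (unfold L; apply Cmod_gt_0; rewrite Cmod_div by auto;
                      apply Rdiv_lt_0_compat; apply Cmod_gt_0; auto).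
  assert (Hlim : is_lim_Cseq (second_antidiff q) (q * (0 - q) * / ((1 + q ^ 3) * L))).
  { unfold second_antidiff. apply is_lim_Cseq_mult.
    - apply is_lim_Cseq_mult; [apply is_lim_Cseq_const|].
      apply is_lim_Cseq_plus; [exact is_lim_pow_double | apply is_lim_Cseq_const].
    - apply is_lim_Cseq_inv; [apply Cmult_neq_0; auto|].
      apply is_lim_Cseq_mult; [apply is_lim_Cseq_const | exact is_lim_qpoch_ratio]. }
  replace ((q ^ 2 * (qpoch_inf (q ^ 4) (q ^ 4) / qpoch_inf q q) - q ^ 2 + q) / (1 + q ^ 3))
    with (second_antidiff q 0 - q * (0 - q) * / ((1 + q ^ 3) * L)).
  - apply (is_series_ext (fun n => second_antidiff q n - second_antidiff q (S n))).
    + intros n. symmetry. apply second_antidiff_step.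
    + exact (is_series_telescope _ _ Hlim).
  - unfold second_antidiff, qpoch_ratio, L. rewrite Nat.mul_0_r. cbn [qpoch].
    change (q ^ 0) with (RtoC 1). field. auto.
Qed.

Lemma first_term_factor (n : nat) :
  q ^ (4 * n + 1) * qpoch_inf (q ^ (4 * n + 4)) (q ^ 4) * qpoch q q (2 * n)
  = qpoch_inf (q ^ 4) (q ^ 4) * (q ^ (4 * n + 1) * qpoch_ratio q n).
Proof.
  rewrite (qpoch_inf_shift (q ^ 4) (q ^ 4) n hq4), <- Cpow_mult_r, <- Cpow_add_r.
  replace (4 + 4 * n)%nat with (4 * n + 4)%nat by lia.
  rewrite qpoch_ratio_alt.
  assert (qpoch (q ^ 4) (q ^ 4) n <> 0) by (apply qpoch_neq_0; lra).
  field. auto.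
Qed.

Lemma second_term_factor (n : nat) :
  q ^ (2 * n + 1) / qpoch_ratio q n
  = qpoch (- q ^ 2) (q ^ 2) n * q ^ (2 * n + 1) / qpoch q (q ^ 2) n.
Proof.
  unfold qpoch_ratio. pose proof (qpoch_odd_neq_0 n). pose proof (qpoch_neg_even_neq_0 n).
  field. auto.
Qed.

End TelescopingSeries.

Theorem theorem3 (q : C) (hq : (Cmod q < 1)%R) :
  is_series
    (fun n : nat => q ^ (4 * n + 1) * qpoch_inf (q ^ (4 * n + 4)) (q ^ 4)
                    * qpoch q q (2 * n))
    (2 * q ^ 2 * qpoch_inf (q ^ 4) (q ^ 4) / (1 + q ^ 3)
     + q * (1 - q) * qpoch_inf q q / (1 + q ^ 3))
  /\
  exists S : C,
    is_series
      (fun n : nat => qpoch (- q ^ 2) (q ^ 2) n * q ^ (2 * n + 1)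
                      / qpoch q (q ^ 2) n) S
    /\ (1 + q ^ 3) * S
       = q ^ 2 * qpoch_inf (q ^ 4) (q ^ 4) / qpoch_inf q q - q ^ 2 + q.
Proof.
  assert (hq4 : (Cmod (q ^ 4) < 1)%R) by (apply Cmod_pow_lt_1; [exact hq | lia]).
  pose proof (one_add_cube_neq_0 q hq).
  pose proof (qpoch_inf_neq_0 q q hq hq).
  pose proof (qpoch_inf_neq_0 (q ^ 4) (q ^ 4) hq4 hq4).
  split.
  - apply (is_series_ext _ _ _ (fun n => eq_sym (first_term_factor q hq n))).
    replace (2 * q ^ 2 * qpoch_inf (q ^ 4) (q ^ 4) / (1 + q ^ 3)
             + q * (1 - q) * qpoch_inf q q / (1 + q ^ 3))
      with (qpoch_inf (q ^ 4) (q ^ 4)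
            * (2 * q ^ 2 / (1 + q ^ 3)
               + q * (1 - q) / (1 + q ^ 3) * (qpoch_inf q q / qpoch_inf (q ^ 4) (q ^ 4))))
      by (field; auto).
    exact (is_series_scal_l _ _ _ (is_series_first q hq)).
  - exists ((q ^ 2 * (qpoch_inf (q ^ 4) (q ^ 4) / qpoch_inf q q) - q ^ 2 + q) / (1 + q ^ 3)).
    split; [|field; auto].
    exact (is_series_ext _ _ _ (second_term_factor q hq) (is_series_second q hq)).
Qed.
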